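(* Let $\Phi$ be a law and $\Theta$ an action theory. If $\Theta$ is modular, then every $\Theta'\in\Theta\ominus\Phi$ is modular.
   Context: Fix a finite set $\mathrm{Act}$ of atomic actions and a finite set $\mathrm{Prop}$ of atoms; $\mathrm{Lit}$ is the set of literals. Boolean formulas are classical propositional formulas over $\mathrm{Prop}$, $\models_{CPL}$ classical consequence. Modal formulas are built from Boolean formulas with the Boolean connectives and $[a]$ ($a\in\mathrm{Act}$); $\langle a\rangle\Phi:=\neg[a]\neg\Phi$. A PDL-model is $\langle W,R\rangle$, $W$ a set of valuations (maximal consistent sets of literals), $R_a\subseteq W\times W$ for each $a$; truth is standard; a model satisfies a formula iff it holds at all worlds; $\Sigma\models_{PDL}\Phi$ iff every model of $\Sigma$ is a model of $\Phi$. A static law is a Boolean formula; an effect law for $a$ is $\varphi\to[a]\psi$; an executability law for $a$ is $\varphi\to\langle a\rangle\top$ ($\varphi,\psi$ Boolean); a law is any of these. An action theory is a finite set $\Theta=S\cup E\cup X$ of static, effect and executability laws; $E_a,X_a$ are those about $a$. $\Theta$ is modular iff for every Boolean $\varphi$, $\Theta\models_{PDL}\varphi$ implies $S\models_{CPL}\varphi$ (with $S$ the static laws of $\Theta$). Syntactic contraction $\Theta\ominus\Phi$ (a set of action theories). Notation: $\bigwedge S$ is the conjunction of $S$; $IP(\chi)$ is the set of prime implicants of $\chi$; for a term $\tau$, $\mathrm{atm}(\tau)$ is its set of atoms, and for $A\subseteq\mathrm{Prop}\setminus\mathrm{atm}(\tau)$, $\varphi_A:=\bigwedge_{p\in A}p\wedge\bigwedge_{p\in\mathrm{Prop}\setminus(\mathrm{atm}(\tau)\cup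 A)}\neg p$. (1) Executability law $\varphi\to\langle a\rangle\top$: if $\Theta\not\models_{PDL}\varphi\to\langle a\rangle\top$ the result is $\{\Theta\}$; otherwise it consists of the theories $(\Theta\setminus X_a)\cup\{(\varphi_i\wedge\neg(\tau\wedge\varphi_A))\to\langle a\rangle\top:\varphi_i\to\langle a\rangle\top\in X_a\}$ for all $\tau\in IP(\bigwedge S\wedge\varphi)$ and $A\subseteq\mathrm{Prop}\setminus\mathrm{atm}(\tau)$ with $S\not\models_{CPL}\neg(\tau\wedge\varphi_A)$. (2) Effect law $\varphi\to[a]\psi$: if $\Theta\not\models_{PDL}\varphi\to[a]\psi$ the result is $\{\Theta\}$; otherwise let $E^-_a$ be the union of all minimal $E'\subseteq E_a$ with $S\cup E'\models_{PDL}\varphi\to[a]\psi$. For every $\tau\in IP(\bigwedge S\wedge\varphi)$, $A\subseteq\mathrm{Prop}\setminus\mathrm{atm}(\tau)$ with $S\not\models_{CPL}\neg(\tau\wedge\varphi_A)$, and $\tau'\in IP(\bigwedge S\wedge\neg\psi)$, the result contains $(\Theta\setminus E^-_a)\cup\{(\varphi_i\wedge\neg(\tau\wedge\varphi_A))\to[a]\psi_i:\varphi_i\to[a]\psi_i\in E^-_a\}\cup\{(\varphi_i\wedge\tau\wedge\varphi_A)\to[a](\psi_i\vee\tau'):\varphi_i\to[a]\psi_i\in E^-_a\}\cup\{(\tau\wedge\varphi_A\wedge\ell)\to[a](\psi\vee\ell):\ell\in L$ for some $L\subseteq\mathrm{Lit}$ with $S\models_{CPL}(\tau\wedge\varphi_A)\to\bigwedge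 L$, $S\not\models_{CPL}\neg(\tau'\wedge\bigwedge L)$, and ($\Theta\not\models_{PDL}(\tau\wedge\varphi_A\wedge\ell)\to[a]\neg\ell$ or $\ell$ is a literal of $\tau'$)$\}$. (3) Static law $\varphi$: if $S\not\models_{CPL}\varphi$ the result is $\{\Theta\}$; otherwise, for every $S^-\in S\ominus\varphi$ (a given classical contraction operator, assumed to behave like a Katsuno–Mendelzon contraction, in particular $S\models_{CPL}\bigwedge S^-$, and to be sound, complete and minimal w.r.t. its semantics), the result contains the theory obtained from $(\Theta\setminus S)\cup S^-$ by replacing, for each action $a$, $X_a$ by $\{(\varphi_i\wedge\varphi)\to\langle a\rangle\top:\varphi_i\to\langle a\rangle\top\in X_a\}$ and adding $\neg\varphi\to[a]\bot$; its set of static laws is $S^-$. *)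

From mathcomp Require Import all_boot.

Set Implicit Arguments.
Unset Strict Implicit.
Unset Printing Implicit Defensive.

Section ActionTheories.

Variables (Atom : finType) (Act : finType).

Inductive bform : Type :=
  | BAtom of Atom
  | BTrue
  | BFalse
  | BNot of bform
  | BAnd of bform & bform
  | BOr of bform & bform
  | BImp of bform & bform.

Inductive mform : Type :=
  | MB of bform
  | MNot of mform
  | MAnd of mform & mform
  | MOr of mform & mform
  | MImp of mform & mform
  | MBox of Act & mform.

Definition MDia (a : Act) (F : mform) : mform := MNot (MBox a (MNot F)).

Inductive law : Type :=
  | LStatic of bform
  | LEffect of Act & bform & bform
  | LExec of Act & bform.

Definition law_form (l : law) : mform :=
  match l with
  | LStatic phi => MB phi
  | LEffect a phi psi => MImp (MB phi) (MBox a (MB psi))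
  | LExec a phi => MImp (MB phi) (MDia a (MB BTrue))
  end.

(* An action theory is a finite set of laws, represented by a list;
   only membership matters. *)
Fixpoint memP (T : Type) (x : T) (s : seq T) : Prop :=
  match s with
  | [::] => False
  | y :: s' => x = y \/ memP x s'
  end.

Definition statics (Th : seq law) : seq bform :=
  foldr (fun l acc => match l with LStatic phi => phi :: acc | _ => acc end)
        [::] Th.

Definition bigand (S : seq bform) : bform := foldr BAnd BTrue S.

(* valuations = maximal consistent sets of literals *)
Definition valuation := {ffun Atom -> bool}.

Fixpoint beval (v : valuation) (f : bform) : bool :=
  match f with
  | BAtom p => v p
  | BTrue => true
  | BFalse => false
  | BNot g => ~~ beval v g
  | BAnd g h => beval v g && beval v h
  | BOr g h => beval v g || beval v h
  | BImp g h => beval v g ==> beval v h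
  end.

Definition cpl_cons (S : seq bform) (phi : bform) : Prop :=
  forall v : valuation, (forall s, memP s S -> beval v s) -> beval v phi.

Record pdl_model := PdlModel {
  mW : valuation -> Prop;
  mR : Act -> valuation -> valuation -> Prop;
  mR_in : forall a v w, mR a v w -> mW v /\ mW w
}.

Fixpoint mtrue (M : pdl_model) (w : valuation) (F : mform) : Prop :=
  match F with
  | MB phi => beval w phi
  | MNot G => ~ mtrue M w G
  | MAnd G H => mtrue M w G /\ mtrue M w H
  | MOr G H => mtrue M w G \/ mtrue M w H
  | MImp G H => mtrue M w G -> mtrue M w H
  | MBox a G => forall w', mR M a w w' -> mtrue M w' G
  end.

Definition model_sat (M : pdl_model) (F : mform) : Prop :=
  forall w, mW M w -> mtrue M w F.

Definition pdl_cons (Sigma : seq mform) (F : mform) : Prop :=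
  forall M : pdl_model, (forall G, memP G Sigma -> model_sat M G) -> model_sat M F.

Definition th_cons (Th : seq law) (F : mform) : Prop :=
  pdl_cons (map law_form Th) F.

Definition modular (Th : seq law) : Prop :=
  forall phi : bform, th_cons Th (MB phi) -> cpl_cons (statics Th) phi.

Definition lit := (Atom * bool)%type.

Definition lit_form (l : lit) : bform :=
  if l.2 then BAtom l.1 else BNot (BAtom l.1).

Definition term_form (t : {set lit}) : bform := bigand (map lit_form (enum t)).

Definition consistent_term (t : {set lit}) : Prop :=
  forall p : Atom, ~ ((p, true) \in t /\ (p, false) \in t).

Definition atm (t : {set lit}) : {set Atom} :=
  [set p | ((p, true) \in t) || ((p, false) \in t)].

Definition is_IP (chi : bform) (t : {set lit}) : Prop :=
  consistent_term t /\
  cpl_cons [:: term_form t] chi /\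
  (forall t' : {set lit}, t' \proper t -> ~ cpl_cons [:: term_form t'] chi).

(* the literal set of phi_A (for A a subset of Atom \ atm t) *)
Definition phiA (t : {set lit}) (A : {set Atom}) : {set lit} :=
  [set l : lit | if l.2 then l.1 \in A else l.1 \notin (atm t :|: A)].

Definition tA (t : {set lit}) (A : {set Atom}) : bform :=
  BAnd (term_form t) (term_form (phiA t A)).

Definition exec_form (a : Act) (phi : bform) : mform := law_form (LExec a phi).
Definition eff_form (a : Act) (phi psi : bform) : mform := law_form (LEffect a phi psi).

Definition same_laws (Th' Th : seq law) : Prop :=
  forall l, memP l Th' <-> memP l Th.

Definition contr_exec (Th : seq law) (a : Act) (phi : bform) (Th' : seq law) : Prop :=
  let S := statics Th in
  (~ th_cons Th (exec_form a phi) /\ same_laws Th' Th) \/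
  (th_cons Th (exec_form a phi) /\
   exists (t : {set lit}) (A : {set Atom}),
     [/\ is_IP (BAnd (bigand S) phi) t,
         A \subset ~: atm t,
         ~ cpl_cons S (BNot (tA t A)) &
         forall l, memP l Th' <->
           ((memP l Th /\ ~ (exists phi_i, l = LExec a phi_i)) \/
            (exists phi_i, memP (LExec a phi_i) Th /\
                           l = LExec a (BAnd phi_i (BNot (tA t A)))))]).

Definition minimal_eff_support (Th : seq law) (a : Act) (phi psi : bform)
    (E' : seq law) : Prop :=
  let S := statics Th in
  let ent E := th_cons (map LStatic S ++ E) (eff_form a phi psi) in
  [/\ (forall l, memP l E' -> memP l Th /\ exists phi_i psi_i, l = LEffect a phi_i psi_i),
      ent E' &
      forall E'', (forall l, memP l E'' -> memP l E') -> ent E'' ->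
                  forall l, memP l E' -> memP l E''].

Definition in_Eminus (Th : seq law) (a : Act) (phi psi : bform) (l : law) : Prop :=
  exists E', minimal_eff_support Th a phi psi E' /\ memP l E'.

Definition contr_eff (Th : seq law) (a : Act) (phi psi : bform) (Th' : seq law) : Prop :=
  let S := statics Th in
  let Em := in_Eminus Th a phi psi in
  (~ th_cons Th (eff_form a phi psi) /\ same_laws Th' Th) \/
  (th_cons Th (eff_form a phi psi) /\
   exists (t : {set lit}) (A : {set Atom}) (t' : {set lit}),
     [/\ is_IP (BAnd (bigand S) phi) t,
         A \subset ~: atm t,
         ~ cpl_cons S (BNot (tA t A)),
         is_IP (BAnd (bigand S) (BNot psi)) t' &
         forall l, memP l Th' <->
           [\/ memP l Th /\ ~ Em l,
               exists phi_i psi_i, Em (LEffect a phi_i psi_i) /\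
                  l = LEffect a (BAnd phi_i (BNot (tA t A))) psi_i,
               exists phi_i psi_i, Em (LEffect a phi_i psi_i) /\
                  l = LEffect a (BAnd phi_i (tA t A)) (BOr psi_i (term_form t')) |
               exists (ll : lit) (L : {set lit}),
                 [/\ ll \in L,
                     cpl_cons S (BImp (tA t A) (term_form L)),
                     ~ cpl_cons S (BNot (BAnd (term_form t') (term_form L))),
                     (~ th_cons Th (eff_form a (BAnd (tA t A) (lit_form ll))
                                              (BNot (lit_form ll)))
                      \/ ll \in t') &
                     l = LEffect a (BAnd (tA t A) (lit_form ll)) (BOr psi (lit_form ll))]]]).

(* (3) static law, given a classical contraction operator:
   scontr S phi Sm  means  Sm belongs to S (-) phi *)
Definition contr_static (scontr : seq bform -> bform -> seq bform -> Prop)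
    (Th : seq law) (phi : bform) (Th' : seq law) : Prop :=
  let S := statics Th in
  (~ cpl_cons S phi /\ same_laws Th' Th) \/
  (cpl_cons S phi /\
   exists Sm, scontr S phi Sm /\
     forall l, memP l Th' <->
       [\/ exists s, memP s Sm /\ l = LStatic s,
           memP l Th /\ (exists a phi_i psi_i, l = LEffect a phi_i psi_i),
           exists a phi_i, memP (LExec a phi_i) Th /\ l = LExec a (BAnd phi_i phi) |
           exists a, l = LEffect a (BNot phi) BFalse]).

Definition contraction (scontr : seq bform -> bform -> seq bform -> Prop)
    (Th : seq law) (Phi : law) (Th' : seq law) : Prop :=
  match Phi with
  | LStatic phi => contr_static scontr Th phi Th'
  | LEffect a phi psi => contr_eff Th a phi psi Th'
  | LExec a phi => contr_exec Th a phi Th'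
  end.

(* Katsuno-Mendelzon-style postulates for the classical contraction operator,
   stated for each member Sm of S (-) phi *)
Definition cpl_equiv (S1 S2 : seq bform) : Prop :=
  cpl_cons S1 (bigand S2) /\ cpl_cons S2 (bigand S1).

Record KM_contraction (scontr : seq bform -> bform -> seq bform -> Prop) : Prop := {
  km_C1 : forall S phi Sm, scontr S phi Sm -> cpl_cons S (bigand Sm);
  km_C2 : forall S phi Sm, scontr S phi Sm -> ~ cpl_cons S phi -> cpl_equiv Sm S;
  km_C3 : forall S phi Sm, scontr S phi Sm -> ~ cpl_cons [::] phi -> ~ cpl_cons Sm phi;
  km_C4 : forall S1 S2 phi1 phi2 Sm1, cpl_equiv S1 S2 ->
            cpl_cons [::] (BImp phi1 phi2) -> cpl_cons [::] (BImp phi2 phi1) ->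
            scontr S1 phi1 Sm1 -> exists Sm2, scontr S2 phi2 Sm2 /\ cpl_equiv Sm1 Sm2;
  km_C5 : forall S phi Sm, scontr S phi Sm -> cpl_cons (phi :: Sm) (bigand S)
}.

End ActionTheories.

(* Contraction only weakens the laws about actions: every new effect or
   executability law has a stronger antecedent or a weaker consequent than a law
   of [Th], or is entailed by [Th]; in the effect and executability cases the
   static laws are untouched, so every Boolean consequence of [Th'] is one of
   [Th], hence of its static laws.  When a static law [phi] is contracted into
   [Sm], a valuation [v] satisfying [Sm] either satisfies [phi], hence all of
   [S] by recovery, and every model of [Th] is a model of [Th']; or it falsifies
   [phi], and then the one-world model on [v] with empty accessibility relations
   is a model of [Th'], since the executability laws of [Th'] all require [phi]. *)
From Stdlib Require Import Setoid.
From mathcomp Require Import all_boot.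

Set Implicit Arguments.
Unset Strict Implicit.
Unset Printing Implicit Defensive.

Lemma memP_map (A B : Type) (f : A -> B) x s :
  memP x (map f s) <-> exists y, memP y s /\ x = f y.
Proof.
elim: s => [|y s IH] /=; first by split=> // -[y []].
split.
- case=> [->|/IH [z [Hz ->]]]; first by exists y; split; [left|].
  by exists z; split; [right|].
- by case=> z [[->|Hz] Hx]; [left | right; apply/IH; exists z].
Qed.

Section Modularity.

Variables (Atom Act : finType).

Implicit Types (Th : seq (law Atom Act)) (M : pdl_model Atom Act)
  (phi psi : bform Atom) (v w : valuation Atom).

Definition models Th M := forall l, memP l Th -> model_sat M (law_form l).

Lemma memP_statics Th s : memP s (statics Th) <-> memP (LStatic Act s) Th.
Proof.
elim: Th => [|[phi|a phi psi|a phi] Th IH] //=; last 2 first.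
- by split=> [/IH|[|/IH]]; [right | |].
- by split=> [/IH|[|/IH]]; [right | |].
by split=> [[->|/IH]|[[->]|/IH]]; [left | right | left | right].
Qed.

Lemma beval_bigand v S : beval v (bigand S) <-> forall s, memP s S -> beval v s.
Proof.
elim: S => [|s S IH] //=; split.
- by move=> /andP [Hs /IH HS] s' [->|/HS].
- by move=> H; rewrite H /=; [apply/IH => s' Hs'; apply: H; right | left].
Qed.

Lemma th_consP Th F : th_cons Th F <-> forall M, models Th M -> model_sat M F.
Proof.
split=> H M HM; apply: H.
- by move=> G /memP_map [l [Hl ->]]; apply: HM.
- by move=> l Hl; apply: HM; apply/memP_map; exists l.
Qed.

Lemma models_statics Th M w s :
  models Th M -> mW M w -> memP s (statics Th) -> beval w s.
Proof. by move=> HM Hw /memP_statics /HM; apply. Qed.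

Lemma modular_weaken Th Th' :
  (forall s, memP (LStatic Act s) Th' <-> memP (LStatic Act s) Th) ->
  (forall M, models Th M -> models Th' M) ->
  modular Th -> modular Th'.
Proof.
move=> Hs HM Hmod phi /th_consP Hphi v Hv.
have /Hmod : th_cons Th (MB Act phi) by apply/th_consP => M /HM /Hphi.
by apply=> s /memP_statics /Hs /memP_statics /Hv.
Qed.

Lemma modular_same_laws Th Th' : same_laws Th' Th -> modular Th -> modular Th'.
Proof. by move=> Hs; apply: modular_weaken => [s|M HM l /Hs /HM]. Qed.

Lemma effect_law_weaken M a phi psi phi' psi' :
  (forall w, beval w phi' -> beval w phi) ->
  (forall w, beval w psi -> beval w psi') ->
  model_sat M (law_form (LEffect a phi psi)) ->
  model_sat M (law_form (LEffect a phi' psi')).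
Proof.
by move=> Hphi Hpsi H w Hw /Hphi /(H w Hw) Hbox w' /Hbox /Hpsi.
Qed.

Lemma exec_law_weaken M a phi phi' :
  (forall w, beval w phi' -> beval w phi) ->
  model_sat M (law_form (LExec a phi)) ->
  model_sat M (law_form (LExec a phi')).
Proof. by move=> Hphi H w Hw /Hphi /(H w Hw). Qed.

Lemma IP_implies chi t w : is_IP chi t -> beval w (term_form t) -> beval w chi.
Proof. by move=> [_ [H _]] Ht; apply: H => s [->|]. Qed.

Lemma modular_contr_exec Th a phi Th' :
  modular Th -> contr_exec Th a phi Th' -> modular Th'.
Proof.
move=> Hmod [[_ /modular_same_laws]|[_ [t [A [_ _ _ Hiff]]]]]; first exact.
apply: modular_weaken Hmod => [s|M HM l /Hiff [[/HM]|[phi_i [/HM Hl ->]]]] //.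
- by rewrite Hiff; split=> [[[]|[? [_]]] //|Hs]; left; split=> // -[].
- by apply: exec_law_weaken Hl => w /andP [].
Qed.

Lemma modular_contr_eff Th a phi psi Th' :
  modular Th -> contr_eff Th a phi psi Th' -> modular Th'.
Proof.
move=> Hmod [[_ /modular_same_laws]|[Hent [t [A [t' [Hip _ _ _ Hiff]]]]]].
  exact.
have EmTh l : in_Eminus Th a phi psi l -> memP l Th.
  by move=> [E' [[HE _ _] /HE []]].
apply: modular_weaken Hmod => [s|M HM l /Hiff].
  rewrite Hiff; split.
  - by case=> [[]|[? [? [_]]]|[? [? [_]]]|[? [? [_ _ _ _]]]].
  - move=> Hs; apply: Or41; split=> // -[E' [[HE _ _] /HE [_ [? [?]]]]] //.
case=> [[/HM]|[phi_i [psi_i [/EmTh /HM Hl ->]]]|[phi_i [psi_i [/EmTh /HM Hl ->]]]|] //.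
- by apply: effect_law_weaken Hl => w // /andP [].
- by apply: effect_law_weaken Hl => w => [/andP []|/= ->].
move=> [ll [L [_ _ _ _ ->]]].
have Hphi : model_sat M (law_form (LEffect a phi psi)).
  by move/th_consP: Hent; apply.
apply: effect_law_weaken Hphi => w => [/andP [/andP [Ht _] _]|/= ->] //.
by case/andP: (IP_implies Hip Ht).
Qed.

Definition point_model v : pdl_model Atom Act :=
  @PdlModel Atom Act (fun w => w = v) (fun _ _ _ => False)
    (fun _ _ _ f => match f with end).

Lemma point_model_law v (l : law Atom Act) :
  match l with
  | LStatic s => is_true (beval v s)
  | LEffect _ _ _ => True
  | LExec _ phi => is_true (~~ beval v phi)
  end ->
  model_sat (point_model v) (law_form l).
Proof.
case: l => [s|a phi psi|a phi] /= Hl w -> //; first by move=> _ w' [].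
by move=> Hphi; move: Hl; rewrite Hphi.
Qed.

Lemma modular_contr_static scontr Th phi Th' :
  KM_contraction scontr ->
  modular Th -> contr_static scontr Th phi Th' -> modular Th'.
Proof.
move=> Hkm Hmod [[_ /modular_same_laws]|[HSphi [Sm [HSm Hiff]]]]; first exact.
have HstSm s : memP s (statics Th') <-> memP s Sm.
  rewrite memP_statics Hiff; split.
  - by case=> [[s' [Hs' [->]]]|[_ [? [? [? ?]]]]|[? [? [_ ?]]]|[? ?]].
  - by move=> Hs; apply: Or41; exists s.
move=> phi0 /th_consP Hphi0 v Hv.
have HvSm s : memP s Sm -> beval v s by move/HstSm; apply: Hv.
case Hp: (beval v phi).
- have HvS : forall s, memP s (statics Th) -> beval v s.
    apply/beval_bigand; apply: (km_C5 Hkm HSm) => s [->|/HvSm] //.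
  apply: (Hmod phi0) HvS; apply/th_consP => M HM; apply: Hphi0 => l /Hiff.
  have HwS w : mW M w -> forall s, memP s (statics Th) -> beval w s.
    by move=> Hw s; apply: models_statics HM Hw.
  case=> [[s [Hs ->]]|[/HM //]|[b [phi_i [/HM Hl ->]]]|[b ->]] w Hw /=.
  + by move/beval_bigand: (km_C1 Hkm HSm (HwS w Hw)); apply.
  + by case/andP => /(Hl w Hw).
  + by rewrite (HSphi w (HwS w Hw)).
- apply: (Hphi0 (point_model v) _ v erefl) => l /Hiff.
  case=> [[s [/HvSm Hs ->]]|[_ [b [? [? ->]]]]|[b [? [_ ->]]]|[b ->]];
    apply: point_model_law => //=.
  by rewrite Hp andbF.
Qed.

End Modularity.

Theorem lemma2 (Atom Act : finType)
    (scontr : seq (bform Atom) -> bform Atom -> seq (bform Atom) -> Prop)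
    (Hkm : KM_contraction scontr)
    (Phi : law Atom Act) (Th Th' : seq (law Atom Act)) :
  modular Th -> contraction scontr Th Phi Th' -> modular Th'.
Proof.
case: Phi => [phi|a phi psi|a phi] /=.
- exact: modular_contr_static.
- exact: modular_contr_eff.
- exact: modular_contr_exec.
Qed.
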